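(* Let $R\subseteq\mathbb R$ be an archimedean real closed field, let $F$ be a formally real extension field of $R$, and let $\xi$ be an $\mathbb R$-place of $F$ with $\xi|_R=\mathrm{id}_R$; put $\overline F=\xi(F)\setminus\{\infty\}\subseteq\mathbb R$. Let $\xi_y$ be the constant extension of $\xi$ to $F(y)$, and for $\zeta\in M(R(y))$ let $\zeta_{\overline F}$ be the constant extension of $\zeta$ to $\overline F(y)$. Then the map $\iota:M(R(y))\to M(F(y))$, $\iota(\zeta)=\zeta_{\overline F}\circ\xi_y$, is a continuous injective map.
   Context: For a field $K$, $M(K)$ is the set of $\mathbb R$-places $K\to\mathbb R\cup\{\infty\}$, with topology generated by the subbasis $H'(b)=\{\zeta\in M(K)\mid \infty\ne\zeta(b)>0\}$, $b\in K$. The constant (Gauss) extension $\xi_y$ of $\xi$ to $F(y)$ is the place of $F(y)$ extending $\xi$ whose valuation is the Gauss valuation: on a polynomial $\sum c_iy^i\in F[y]$ with all $c_i$ in the valuation ring of $\xi$ it acts by applying $\xi$ to the coefficients, and its residue field is $\overline F(y)$. Every $\zeta\in M(R(y))$ is the identity on $R$; its constant extension $\zeta_{\overline F}$ is the unique $\mathbb R$-place of $\overline F(y)$ which is the identity on $\overline F$ and satisfies $\zeta_{\overline F}(y)=\zeta(y)$ (if $\zeta(y)=a\in R$ this is the place determined by $y-a$, if $\zeta(y)=\infty$ the place determined by $1/y$). $R(y)$, $F(y)$, $\overline F(y)$ are rational function fields in one variable $y$. *)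

From HB Require Import structures.
From mathcomp Require Import all_boot all_order all_algebra.
From mathcomp Require Import fraction.
From mathcomp Require Import reals.
Set Implicit Arguments. Unset Strict Implicit. Unset Printing Implicit Defensive.
Import Order.TTheory GRing.Theory Num.Theory.
Local Open Scope ring_scope.

(* Conventions.  A place  phi : K -> L u {oo}  is encoded as a function
   K -> option L, with  None  standing for  oo.                         *)

Definition ratfun (K : fieldType) := {fraction {poly K}}.
Definition pfrac (K : fieldType) (p : {poly K}) : ratfun K :=
  @FracField.tofrac _ p.
Definition yvar (K : fieldType) : ratfun K := pfrac 'X.
Definition cfrac (K : fieldType) (c : K) : ratfun K := pfrac c%:P.

(* phi is a place of the subfield S of K (S given as a predicate on K,
   the axioms only quantify over elements of S); values in L u {oo}.
   The domain  {x | phi x <> oo}  is a subring on which phi is a ring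
   morphism, and phi x = oo iff x <> 0 and phi (x^-1) = 0 (this makes the
   domain a valuation ring whose maximal ideal is the kernel of phi).   *)
Definition is_place_on (K L : fieldType) (S : K -> Prop) (phi : K -> option L)
  : Prop :=
  [/\ phi 1 = Some 1,
      forall x y a b, S x -> S y -> phi x = Some a -> phi y = Some b ->
        phi (x + y) = Some (a + b),
      forall x y a b, S x -> S y -> phi x = Some a -> phi y = Some b ->
        phi (x * y) = Some (a * b) &
      forall x, S x -> (phi x = None <-> (x != 0 /\ phi x^-1 = Some 0))].

Definition is_place (K L : fieldType) (phi : K -> option L) : Prop :=
  is_place_on (fun _ => True) phi.

(* M(K): the R-places of K, Rr playing the role of the real numbers. *)
Definition Mset (Rr : realType) (K : fieldType) (z : K -> option Rr) : Prop :=
  is_place z.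

Definition Hp (Rr : realType) (K : fieldType) (b : K) (z : K -> option Rr)
  : Prop := exists2 v, z b = Some v & 0 < v.

(* U (a subset of M(K)) is open for the topology generated by the H'(b):
   every point of U lies in a finite intersection of subbasic sets that is
   contained in U. *)
Definition Mopen (Rr : realType) (K : fieldType)
  (U : (K -> option Rr) -> Prop) : Prop :=
  forall z, Mset z -> U z ->
    exists bs : seq K, (forall b, b \in bs -> Hp b z) /\
      (forall z', Mset z' -> (forall b, b \in bs -> Hp b z') -> U z').

Definition Mcontinuous (Rr : realType) (K1 K2 : fieldType)
  (f : (K1 -> option Rr) -> (K2 -> option Rr)) : Prop :=
  forall b : K2, Mopen (fun z => Hp b (f z)).

Definition formally_real (F : fieldType) : Prop :=
  forall s : seq F, \sum_(x <- s) x ^+ 2 != -1.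

Definition Fbar (Rr : realType) (F : fieldType) (xi : F -> option Rr)
  (a : Rr) : Prop := exists x, xi x = Some a.

Definition Fbar_y (Rr : realType) (F : fieldType) (xi : F -> option Rr)
  (f : ratfun Rr) : Prop :=
  exists p q : {poly Rr}, [/\ forall i, Fbar xi p`_i, forall i, Fbar xi q`_i,
     q != 0 & f = pfrac p / pfrac q].

(* coefficientwise application of xi (only meaningful when all
   coefficients lie in the valuation ring of xi) *)
Definition xi_bar (Rr : realType) (F : fieldType) (xi : F -> option Rr)
  (p : {poly F}) : {poly Rr} := map_poly (fun c => odflt 0 (xi c)) p.

(* xiy is the constant (Gauss) extension of xi to F(y): a place of F(y)
   with values in Fbar(y) u {oo}, extending xi, acting coefficientwise on
   polynomials whose coefficients are in the valuation ring of xi. *)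
Definition is_const_ext (Rr : realType) (F : fieldType) (xi : F -> option Rr)
  (xiy : ratfun F -> option (ratfun Rr)) : Prop :=
  [/\ is_place xiy,
      forall f a, xiy f = Some a -> Fbar_y xi a,
      forall c : F, xiy (cfrac c) = omap (@cfrac Rr) (xi c) &
      forall p : {poly F}, (forall i, xi p`_i <> None) ->
        xiy (pfrac p) = Some (pfrac (xi_bar xi p))].

Definition is_const_ext_Fbar (Rr : realType) (R F : fieldType)
  (xi : F -> option Rr) (zeta : ratfun R -> option Rr)
  (zF : ratfun Rr -> option Rr) : Prop :=
  [/\ is_place_on (Fbar_y xi) zF,
      forall a, Fbar xi a -> zF (cfrac a) = Some a &
      zF (yvar Rr) = zeta (yvar R)].

Definition iota_map (Rr : realType) (R F : fieldType)
  (xiy : ratfun F -> option (ratfun Rr))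
  (Z : (ratfun R -> option Rr) -> ratfun Rr -> option Rr)
  (zeta : ratfun R -> option Rr) : ratfun F -> option Rr :=
  fun f => obind (Z zeta) (xiy f).

(* iota(zeta) is the composite of the places xi_y and zeta_Fbar, hence a place.
   An R-place of R(y) is the identity on R (R is archimedean and real closed,
   so it has only one embedding into the reals), so it is determined by its
   value at y; as xi_y(y) = y, iota(zeta)(y) = zeta(y), whence injectivity.
   For continuity at zeta, write xi_y(b) in lowest terms P(t)/Q(t) over Fbar,
   with t = y or 1/y chosen so that zeta(t) = c is finite.  Then
   iota(zeta')(b) = P(x)/Q(x) where x = zeta'(t), which stays positive for x
   near c, and a single subbasic condition r2 - (t - r1)^2 > 0 with rational
   r1, r2 forces x near c. *)

From HB Require Import structures.
From mathcomp Require Import all_boot all_order all_algebra.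
From mathcomp Require Import fraction generic_quotient.
From mathcomp Require Import reals boolp polyrcf.
From mathcomp Require Import lra zify.
Import Order.TTheory GRing.Theory Num.Theory.
Local Open Scope ring_scope.

Section PlaceOn.
Context {K L : fieldType} {S : K -> Prop} {phi : K -> option L}.
Hypothesis phi_place : is_place_on S phi.

Lemma place1 : phi 1 = Some 1. Proof. by case: phi_place. Qed.

Lemma placeD {x y a b} : S x -> S y -> phi x = Some a -> phi y = Some b ->
  phi (x + y) = Some (a + b).
Proof. by case: phi_place => _ + _ _; apply. Qed.

Lemma placeM {x y a b} : S x -> S y -> phi x = Some a -> phi y = Some b ->
  phi (x * y) = Some (a * b).
Proof. by case: phi_place => _ _ + _; apply. Qed.

Lemma place_infty {x} : S x -> (phi x = None <-> (x != 0 /\ phi x^-1 = Some 0)).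
Proof. by case: phi_place => _ _ _; apply. Qed.

Lemma place_inftyV {x} : S x -> phi x = None -> phi x^-1 = Some 0.
Proof. by move=> Sx /(place_infty Sx) []. Qed.

Hypothesis S0 : S 0.

Lemma place0 : phi 0 = Some 0.
Proof.
case E: (phi 0) => [a|]; last by move/(place_infty S0): E => -[]; rewrite eqxx.
have := placeD S0 S0 E E; rewrite addr0 E => -[h]; congr Some.
by apply: (addIr a); rewrite add0r -h.
Qed.

Lemma place_neq0 {x a} : phi x = Some a -> a != 0 -> x != 0.
Proof. by move=> E; apply: contra_neq => x0; move: E; rewrite x0 place0 => -[]. Qed.

Lemma placeV {x a} : S x -> S x^-1 -> phi x = Some a -> a != 0 ->
  phi x^-1 = Some a^-1.
Proof.
move=> Sx Sxi E a0; have x0 := place_neq0 E a0.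
case E': (phi x^-1) => [b|].
  have := placeM Sx Sxi E E'; rewrite mulfV // place1 => -[h]; congr Some.
  by apply: (mulfI a0); rewrite mulfV // -h.
by move/(place_infty Sxi): E' => [_]; rewrite invrK E => -[]/eqP; rewrite (negbTE a0).
Qed.

Lemma place_div {x y a b} : S x -> S y -> S x^-1 -> S y^-1 -> S (x / y) ->
  S (y * x^-1) -> phi x = Some a -> phi y = Some b -> y != 0 ->
  (a != 0) || (b != 0) ->
  phi (x / y) = if b == 0 then None else Some (a / b).
Proof.
move=> Sx Sy Sxi Syi Sxy Syx Ex Ey y0 ab.
have [b0|b0] := eqVneq b 0; last by apply: placeM => //; apply: placeV.
move: ab; rewrite b0 eqxx orbF => a0; have x0 := place_neq0 Ex a0.
apply/(place_infty Sxy); split; first by rewrite mulf_neq0 ?invr_eq0.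
by rewrite invf_div (placeM Sy Sxi Ey (placeV Sx Sxi Ex a0)) b0 mul0r.
Qed.
End PlaceOn.

Lemma place_comp {K L M : fieldType} {S : L -> Prop}
    {phi : K -> option L} {psi : L -> option M} :
  is_place phi -> is_place_on S psi -> S 0 ->
  (forall x a, phi x = Some a -> S a) ->
  is_place (fun x => obind psi (phi x)).
Proof.
move=> phiP psiP S0 phiS; split.
- by rewrite (place1 phiP) /= (place1 psiP).
- move=> x y a b _ _; case Ex: (phi x) => [u|] //= Eu.
  case Ey: (phi y) => [w|] //= Ew.
  by rewrite (placeD phiP I I Ex Ey) /= (placeD psiP (phiS _ _ Ex) (phiS _ _ Ey) Eu Ew).
- move=> x y a b _ _; case Ex: (phi x) => [u|] //= Eu.
  case Ey: (phi y) => [w|] //= Ew.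
  by rewrite (placeM phiP I I Ex Ey) /= (placeM psiP (phiS _ _ Ex) (phiS _ _ Ey) Eu Ew).
- move=> x _; split.
  + case Ex: (phi x) => [u|] /= Eu; last first.
      have [x0 Exi] := (place_infty phiP I).1 Ex.
      by rewrite Exi /= (place0 psiP S0).
    have [u0 Eui] := (place_infty psiP (phiS _ _ Ex)).1 Eu.
    by rewrite (place_neq0 phiP I Ex u0) (placeV phiP I I I Ex u0).
  + move=> [x0]; case Exi: (phi x^-1) => [w|] //= Ew.
    case Ex: (phi x) => [u|] //=; case Eu: (psi u) => [c|] //.
    have := placeM psiP (phiS _ _ Ex) (phiS _ _ Exi) Eu Ew.
    have := placeM phiP I I Ex Exi; rewrite mulfV // (place1 phiP) => -[<-].
    by rewrite (place1 psiP) mulr0 => -[]/eqP; rewrite oner_eq0.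
Qed.

Section Place.
Context {K L : fieldType} {phi : K -> option L}.
Hypothesis phi_place : is_place phi.

Lemma place_nat n : phi n%:R = Some n%:R.
Proof.
elim: n => [|n IH]; first by rewrite (place0 phi_place I).
by rewrite -addn1 !natrD (placeD phi_place I I IH (place1 phi_place)).
Qed.

Lemma placeN1 : phi (-1) = Some (-1).
Proof.
case E: (phi (-1)) => [m|]; last first.
  by move/(place_infty phi_place I): (E) => [_]; rewrite invrN invr1 E.
have := placeD phi_place I I E (place1 phi_place).
rewrite addNr (place0 phi_place I) => -[h].
by congr Some; apply: (addIr 1); rewrite -h addNr.
Qed.

Lemma placeN {x a} : phi x = Some a -> phi (- x) = Some (- a).
Proof. by move=> E; rewrite -mulN1r (placeM phi_place I I placeN1 E) mulN1r. Qed.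

Lemma place_inftyN {x} : phi x = None -> phi (- x) = None.
Proof. by case E: (phi (- x)) => [m|] // /esym; rewrite -(opprK x) (placeN E). Qed.

Lemma place_inftyD {x y b} : phi x = None -> phi y = Some b -> phi (x + y) = None.
Proof.
move=> Ex Ey; case E: (phi (x + y)) => [m|] //.
by have := placeD phi_place I I E (placeN Ey); rewrite addrK Ex.
Qed.

Lemma place_infty_sqr {x} : phi x = None -> phi (x ^+ 2) = None.
Proof.
move=> Ex; case E: (phi (x ^+ 2)) => [m|] //.
have [x0 Exi] := (place_infty phi_place I).1 Ex.
by have := placeM phi_place I I E Exi; rewrite expr2 mulfK // Ex.
Qed.
End Place.

Lemma place_1_plus_sqr {K : fieldType} {L : realFieldType} {phi : K -> option L}
    x :
  is_place phi -> phi (1 + x ^+ 2) <> Some 0.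
Proof.
move=> phiP; case E: (phi x) => [t|].
  rewrite (placeD phiP I I (place1 phiP) (placeM phiP I I E E)) -expr2 => -[].
  by apply/eqP; rewrite gt_eqF // (lt_le_trans ltr01) // lerDl sqr_ge0.
have [x0 Ei] := (place_infty phiP I).1 E => h.
have := placeM phiP I I (placeM phiP I I Ei Ei) h.
have -> : x^-1 * x^-1 * (1 + x ^+ 2) = 1 + x^-1 * x^-1.
  by rewrite mulrDr mulr1 expr2 mulrACA mulVf // mulr1 addrC.
rewrite (placeD phiP I I (place1 phiP) (placeM phiP I I Ei Ei)) !mulr0 addr0.
by move=> -[]/eqP; rewrite oner_eq0.
Qed.

Lemma place_finite_or_inv {K L : fieldType} {phi : K -> option L} x :
  is_place phi -> exists c, phi (if phi x == None then x^-1 else x) = Some c.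
Proof.
move=> phiP; case E: (phi x) => [a|] /=; first by exists a; rewrite E.
by exists 0; apply: (place_inftyV phiP I).
Qed.

Section PlaceHorner.
Context {K L M : fieldType} (f : {rmorphism K -> L}) (g : {rmorphism K -> M}).
Context {S : L -> Prop} {phi : L -> option M}.
Hypothesis phi_place : is_place_on S phi.
Hypothesis SD : forall x y, S x -> S y -> S (x + y).
Hypothesis SM : forall x y, S x -> S y -> S (x * y).
Hypothesis SV : forall x, S x -> S x^-1.
Hypothesis S_f : forall c, S (f c).
Hypothesis phi_f : forall c, phi (f c) = Some (g c).
Context {t : L} {a : M}.
Hypothesis St : S t.
Hypothesis phi_t : phi t = Some a.

Let S0 : S 0. Proof. by rewrite -(rmorph0 f). Qed.

Lemma horner_map_in P : S (map_poly f P).[t].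
Proof.
elim/poly_ind: P => [|P c IH]; first by rewrite rmorph0 horner0.
rewrite rmorphD rmorphM /= map_polyX map_polyC /= hornerMXaddC.
exact/SD/S_f/SM.
Qed.

Lemma place_horner P : phi (map_poly f P).[t] = Some (map_poly g P).[a].
Proof.
elim/poly_ind: P => [|P c IH]; first by rewrite !rmorph0 !horner0 (place0 phi_place S0).
rewrite !rmorphD !rmorphM /= !map_polyX !map_polyC /= !hornerMXaddC.
exact: (placeD phi_place (SM _ _ (horner_map_in P) St) (S_f c)
  (placeM phi_place (horner_map_in P) St IH phi_t) (phi_f c)).
Qed.

(* The Bezout identity prevents [P] and [Q] from vanishing together at [a]. *)
Lemma place_horner_div {P Q u v} : u * P + v * Q = 1 -> (map_poly f Q).[t] != 0 ->
  phi ((map_poly f P).[t] / (map_poly f Q).[t]) =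
  if (map_poly g Q).[a] == 0 then None
  else Some ((map_poly g P).[a] / (map_poly g Q).[a]).
Proof.
move=> Bezout Q0; have SP := horner_map_in P; have SQ := horner_map_in Q.
apply: (place_div phi_place S0); rewrite ?place_horner //; try exact: SV.
- exact/SM/SV.
- exact/SM/SV.
rewrite -negb_and; apply/negP => /andP[/eqP P0 /eqP Qa0].
have /(congr1 (fun p => (map_poly g p).[a])) := Bezout.
rewrite rmorphD !rmorphM rmorph1 hornerD !hornerM hornerC P0 Qa0 !mulr0 addr0.
by move/eqP; rewrite eq_sym oner_eq0.
Qed.
End PlaceHorner.

Lemma frac_tofrac_div {R : idomainType} (x : {fraction R}) :
  exists a b : R, b != 0 /\ x = FracField.tofrac a / FracField.tofrac b.
Proof.
elim/quotW: x => r; exists (\n_r), (\d_r); split; first exact: denom_ratioP.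
rewrite /GRing.inv /GRing.mul /= !piE; apply/eqmodP => /=.
rewrite FracField.equivfE /FracField.mulf /FracField.invf /=.
rewrite !numden_Ratio ?oner_neq0 ?denom_ratioP ?mulf_neq0 ?oner_neq0 ?denom_ratioP //.
by rewrite !mul1r !mulr1 mulrC.
Qed.

Section HornerRepr.
Context {K L : fieldType} (f : {rmorphism K -> L}).

Lemma horner_rev_coef {y : L} {P : {poly K}} {n} : y != 0 -> (size P <= n)%N ->
  (map_poly f (\poly_(i < n) P`_(n - i.+1))).[y^-1] * y ^+ n.-1 =
  (map_poly f P).[y].
Proof.
move=> y0 sP.
rewrite (@horner_coef_wide _ n) ?size_map_poly ?size_poly //.
rewrite (@horner_coef_wide _ n (map_poly f P)) ?size_map_poly //.
rewrite mulr_suml (reindex_inj rev_ord_inj) /=; apply: eq_bigr => i _.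
rewrite !coef_map /= coef_poly /=; have hi := ltn_ord i.
rewrite ifT; last by lia.
have -> : (n - (n - i.+1).+1 = i)%N by lia.
rewrite -mulrA; congr (_ * _).
have -> : n.-1 = ((n - i.+1) + i)%N by lia.
by rewrite exprD exprVn mulrA mulVf ?mul1r // expf_neq0.
Qed.

Lemma horner_div_inv {y : L} {P Q : {poly K}} :
  y != 0 -> (map_poly f Q).[y] != 0 ->
  exists P' Q' : {poly K}, (map_poly f Q').[y^-1] != 0 /\
    (map_poly f P).[y] / (map_poly f Q).[y] =
    (map_poly f P').[y^-1] / (map_poly f Q').[y^-1].
Proof.
move=> y0 Q0; pose n := maxn (size P) (size Q).
exists (\poly_(i < n) P`_(n - i.+1)), (\poly_(i < n) Q`_(n - i.+1)).
rewrite -(horner_rev_coef y0 (leq_maxl (size P) (size Q))).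
rewrite -(horner_rev_coef y0 (leq_maxr (size P) (size Q))) in Q0 *.
split; first by move: Q0; rewrite mulf_eq0 negb_or => /andP[].
by rewrite invfM mulrACA mulfV ?mulr1 // expf_neq0.
Qed.

Lemma horner_div_coprime (t : L) (P Q : {poly K}) : (map_poly f Q).[t] != 0 ->
  exists P1 Q1 u v, [/\ u * P1 + v * Q1 = 1, (map_poly f Q1).[t] != 0 &
    (map_poly f P).[t] / (map_poly f Q).[t] =
    (map_poly f P1).[t] / (map_poly f Q1).[t]].
Proof.
move=> Q0; have Qnz : Q != 0 by apply: contra_neq Q0 => ->; rewrite rmorph0 horner0.
have cop : coprimep (P %/ gcdp P Q) (Q %/ gcdp P Q).
  by apply: coprimep_div_gcd; rewrite Qnz orbT.
have /Bezout_eq1_coprimepP [[u v] /= Bezout] := cop.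
exists (P %/ gcdp P Q), (Q %/ gcdp P Q), u, v.
have hornerG p : gcdp P Q %| p ->
    (map_poly f p).[t] = (map_poly f (p %/ gcdp P Q)).[t] * (map_poly f (gcdp P Q)).[t].
  by move=> /divpK {1}<-; rewrite rmorphM hornerM.
move: Q0; rewrite (hornerG Q (dvdp_gcdr P Q)) mulf_eq0 negb_or => /andP[Q1t Gt].
split => //; rewrite (hornerG P (dvdp_gcdl P Q)).
by rewrite invfM mulrACA mulfV ?mulr1.
Qed.
End HornerRepr.

Definition cfracm (K : fieldType) : {rmorphism K -> ratfun K} :=
  @FracField.tofrac _ \o polyC.

Lemma horner_cfracm_yvar (K : fieldType) (P : {poly K}) :
  (map_poly (cfracm K) P).[yvar K] = pfrac P.
Proof.
rewrite /cfracm map_poly_comp /yvar /pfrac horner_map; congr FracField.tofrac.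
elim/poly_ind: P => [|P c IH]; first by rewrite rmorph0 horner0.
by rewrite rmorphD rmorphM /= map_polyX map_polyC /= hornerMXaddC IH.
Qed.

Lemma yvar_neq0 (K : fieldType) : yvar K != 0.
Proof. by rewrite /yvar /pfrac tofrac_eq0 polyX_eq0. Qed.

(* The coordinate [y] or [1/y], chosen so that a given place is finite on it. *)
Definition ycoord (K : fieldType) (at_infty : bool) : ratfun K :=
  if at_infty then (yvar K)^-1 else yvar K.

Lemma ycoord_coprime {K L : fieldType} (f : {rmorphism K -> ratfun L})
    (at_infty : bool) (P Q : {poly K}) :
  (map_poly f Q).[yvar L] != 0 ->
  exists P1 Q1 u v, [/\ u * P1 + v * Q1 = 1,
    (map_poly f Q1).[ycoord L at_infty] != 0 &
    (map_poly f P).[yvar L] / (map_poly f Q).[yvar L] =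
    (map_poly f P1).[ycoord L at_infty] / (map_poly f Q1).[ycoord L at_infty]].
Proof.
rewrite /ycoord; case: at_infty => Q0; last exact: horner_div_coprime.
have [P' [Q' [Q'0 ->]]] := horner_div_inv f (P := P) (yvar_neq0 L) Q0.
exact: horner_div_coprime.
Qed.

Section PlaceConst.
Context {R : archiRcfType} {K : fieldType} (i : {rmorphism R -> K}).
Context {L : realFieldType} {zeta : K -> option L}.
Hypothesis zeta_place : is_place zeta.

(* [c^2 <= n] in the archimedean [R], so [n / c^2 = 1 + s^2] for some [s];
   were [zeta (i c)] infinite, [zeta (i (1 + s^2))] would be [0]. *)
Lemma place_rmorph_finite c : zeta (i c) <> None.
Proof.
move=> E; have [c0 Ei] := (place_infty zeta_place I).1 E.
have c0' : c != 0 by apply: contra_neq c0 => ->; rewrite rmorph0.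
have Ed : zeta (i c^-1) = Some 0 by rewrite fmorphV.
have c2 : 0 <= c ^+ 2 by rewrite sqr_ge0.
have hn := archi_boundP c2; set n := Num.Def.archi_bound _ in hn.
have e0 : 0 <= n%:R * c^-1 ^+ 2 - 1.
  have c2p : 0 < c ^+ 2 by rewrite lt_def sqrf_eq0 c0' sqr_ge0.
  by rewrite subr_ge0 exprVn ler_pdivlMr ?mul1r ?ltW.
set s := Num.sqrt (n%:R * c^-1 ^+ 2 - 1).
have es : 1 + s ^+ 2 = n%:R * c^-1 ^+ 2 by rewrite sqr_sqrtr // addrC subrK.
apply: (place_1_plus_sqr (i s) zeta_place).
rewrite -rmorphXn -(rmorph1 i) -rmorphD es rmorphM rmorph_nat rmorphXn expr2.
by rewrite (placeM zeta_place I I (place_nat zeta_place n) (placeM zeta_place I I Ed Ed)) !mulr0.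
Qed.

(* [zeta_place] is a dummy dependency, so that the morphism instances below
   can be declared. *)
Definition place_restr (c : R) : L := let _ := zeta_place in odflt 0 (zeta (i c)).

Lemma place_restrE c : zeta (i c) = Some (place_restr c).
Proof.
rewrite /place_restr; case E: (zeta _) => //.
by have := place_rmorph_finite c; rewrite E.
Qed.

Lemma place_restr_zmod : zmod_morphism place_restr.
Proof.
move=> x y; have := placeD zeta_place I I (place_restrE x) (placeN zeta_place (place_restrE y)).
by rewrite -rmorphN -rmorphD place_restrE => -[].
Qed.

Lemma place_restr_monoid : monoid_morphism place_restr.
Proof.
split; first by have := place_restrE 1; rewrite rmorph1 (place1 zeta_place) => -[].
move=> x y; have := placeM zeta_place I I (place_restrE x) (place_restrE y).
by rewrite -rmorphM place_restrE => -[].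
Qed.
End PlaceConst.

HB.instance Definition _ (R : archiRcfType) (K : fieldType) (i : {rmorphism R -> K})
  (L : realFieldType) (zeta : K -> option L) (zeta_place : is_place zeta) :=
  GRing.isZmodMorphism.Build R L (place_restr i zeta_place) (place_restr_zmod i zeta_place).
HB.instance Definition _ (R : archiRcfType) (K : fieldType) (i : {rmorphism R -> K})
  (L : realFieldType) (zeta : K -> option L) (zeta_place : is_place zeta) :=
  GRing.isMonoidMorphism.Build R L (place_restr i zeta_place) (place_restr_monoid i zeta_place).

Lemma rcf_rmorph_ge0 {R : rcfType} {L : realDomainType} (f : {rmorphism R -> L}) x :
  0 <= x -> 0 <= f x.
Proof. by move=> x0; rewrite -(sqr_sqrtr x0) rmorphXn sqr_ge0. Qed.

Lemma rcf_rmorph_eq {R : rcfType} {L : archiRealFieldType} (f g : {rmorphism R -> L}) :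
  f =1 g.
Proof.
suff le_fg (f1 f2 : {rmorphism R -> L}) c : f1 c <= f2 c.
  by move=> c; apply/eqP; rewrite eq_le !le_fg.
rewrite leNgt; apply/negP => lt.
have [q] := rat_in_itvoo lt; rewrite in_itv /= => /andP[h1 h2].
have [cq|qc] := lerP c (ratr q).
  have := @rcf_rmorph_ge0 _ _ f1 (ratr q - c); rewrite subr_ge0 => /(_ cq).
  by rewrite rmorphB fmorph_rat subr_ge0 => /(lt_le_trans h2); rewrite ltxx.
have := @rcf_rmorph_ge0 _ _ f2 (c - ratr q); rewrite subr_ge0 (ltW qc) => /(_ isT).
by rewrite rmorphB fmorph_rat subr_ge0 => /(lt_le_trans h1); rewrite ltxx.
Qed.

Section PlaceConstUnique.
Context {R : archiRcfType} {K : fieldType} (i : {rmorphism R -> K}).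
Context {L : archiRealFieldType} {zeta : K -> option L}.
Hypothesis zeta_place : is_place zeta.

Lemma place_rmorph (g : {rmorphism R -> L}) c : zeta (i c) = Some (g c).
Proof. by rewrite (place_restrE i zeta_place) (rcf_rmorph_eq _ g c). Qed.

Lemma place_rmorph_rat q : zeta (i (ratr q)) = Some (ratr q).
Proof. by rewrite (place_rmorph (place_restr i zeta_place)) fmorph_rat. Qed.
End PlaceConstUnique.

Lemma ratfun_place_eq {R : archiRcfType} {L : archiRealFieldType}
    (zeta1 zeta2 : ratfun R -> option L) :
  is_place zeta1 -> is_place zeta2 -> zeta1 (yvar R) = zeta2 (yvar R) ->
  zeta1 =1 zeta2.
Proof.
move=> z1P z2P ey w; have [P [Q [Q0 ->]]] := frac_tofrac_div w.
have Qy : (map_poly (cfracm R) Q).[yvar R] != 0.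
  by rewrite horner_cfracm_yvar /pfrac tofrac_eq0.
set b := zeta1 (yvar R) == None.
have [P1 [Q1 [u [v [Bezout Q1t ew]]]]] := ycoord_coprime (cfracm R) b P Q Qy.
rewrite !horner_cfracm_yvar in ew; rewrite [LHS in zeta1 LHS]ew [LHS in zeta2 LHS]ew.
have [c [E1 E2]] : exists c, zeta1 (ycoord R b) = Some c /\ zeta2 (ycoord R b) = Some c.
  rewrite /b /ycoord; case E: (zeta1 (yvar R)) => [a|] /=; first by exists a; rewrite -ey.
  exists 0; split; first by apply: (place_inftyV z1P I).
  by apply: (place_inftyV z2P I); rewrite -ey.
pose g := place_restr (cfracm R) z1P.
have eval zeta : is_place zeta -> zeta (ycoord R b) = Some c ->
    zeta ((map_poly (cfracm R) P1).[ycoord R b] / (map_poly (cfracm R) Q1).[ycoord R b]) =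
    if (map_poly g Q1).[c] == 0 then None
    else Some ((map_poly g P1).[c] / (map_poly g Q1).[c]).
  move=> zP Et; exact: (place_horner_div (cfracm R) g zP (fun _ _ _ _ => I)
    (fun _ _ _ _ => I) (fun _ _ => I) (fun _ => I) (place_rmorph (cfracm R) zP g) I Et Bezout Q1t).
by rewrite (eval _ z1P E1) (eval _ z2P E2).
Qed.

(* Witness: [B = r2 - (t - r1)^2] with rationals [r1], [r2] chosen so that
   [B > 0] forces [|t - r1| < d/2]. *)
Lemma place_nbhs {R : archiRcfType} {K : fieldType} (i : {rmorphism R -> K})
    {L : realType} {zeta : K -> option L} {t : K} {c d : L} :
  is_place zeta -> zeta t = Some c -> 0 < d ->
  exists B : K, Hp B zeta /\ forall zeta', is_place zeta' -> Hp B zeta' ->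
    exists2 x, zeta' t = Some x & `|x - c| < d.
Proof.
move=> zP Et d0.
have [q1 /andP[q1_gt q1_lt]] : exists q, (c - d / 2 < ratr q) && (ratr q < c).
  by have [q] := @rat_in_itvoo L (c - d / 2) c ltac:(lra); exists q.
set r1 : L := ratr q1 in q1_gt q1_lt.
have [q2 /andP[q2_gt q2_lt]] : exists q, ((c - r1) ^+ 2 < ratr q) && (ratr q < (d / 2) ^+ 2).
  by have [q] := @rat_in_itvoo L ((c - r1) ^+ 2) ((d / 2) ^+ 2) ltac:(nra); exists q.
set r2 : L := ratr q2 in q2_gt q2_lt.
pose B := i (ratr q2) - (t - i (ratr q1)) ^+ 2.
have placeB zeta' x : is_place zeta' -> zeta' t = Some x ->
    zeta' B = Some (r2 - (x - r1) ^+ 2).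
  move=> z'P Ex; rewrite /B.
  apply: (placeD z'P I I (place_rmorph_rat i z'P q2)); apply: (placeN z'P).
  have Ed := placeD z'P I I Ex (placeN z'P (place_rmorph_rat i z'P q1)).
  by rewrite !expr2 (placeM z'P I I Ed Ed).
exists B; split.
  by exists (r2 - (c - r1) ^+ 2); [exact: placeB | rewrite subr_gt0].
move=> zeta' z'P [s Es s0].
case Ex: (zeta' t) => [x|]; last first.
  have Et1 := place_inftyD z'P Ex (placeN z'P (place_rmorph_rat i z'P q1)).
  by rewrite /B addrC (place_inftyD z'P (place_inftyN z'P (place_infty_sqr z'P Et1))
    (place_rmorph_rat i z'P q2)) in Es.
exists x => //; move: Es; rewrite (placeB _ x z'P Ex) => -[sE].
rewrite -sE subr_gt0 in s0.
have : (x - r1) ^+ 2 < (d / 2) ^+ 2 by apply: lt_trans q2_lt.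
by rewrite ltr_norml; move=> ?; apply/andP; split; nra.
Qed.

Lemma horner_div_gt0_nbhs {L : rcfType} {P Q : {poly L}} {c} :
  Q.[c] != 0 -> 0 < P.[c] / Q.[c] ->
  exists2 d, 0 < d & forall x, `|x - c| < d -> Q.[x] != 0 /\ 0 < P.[x] / Q.[x].
Proof.
move=> Qc PQc_gt0.
have PQc : 0 < (P * Q).[c].
  have -> : (P * Q).[c] = P.[c] / Q.[c] * Q.[c] ^+ 2 by rewrite hornerM expr2 mulrA divfK.
  by rewrite mulr_gt0 // exprn_even_gt0.
have [d d0 hd] := poly_cont c (P * Q) PQc; exists d => // x /hd.
rewrite ltr_norml => /andP[PQx _]; have {}PQx : 0 < (P * Q).[x] by lra.
have Qx : Q.[x] != 0 by apply: contraTneq PQx => Qx0; rewrite hornerM Qx0 mulr0 ltxx.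
have -> : P.[x] / Q.[x] = (P * Q).[x] / Q.[x] ^+ 2.
  by rewrite hornerM expr2 invfM mulrA mulfK.
by split; rewrite // divr_gt0 // exprn_even_gt0.
Qed.

Section SubField.
Variables (F : fieldType) (S : divringClosed F).
Inductive sub_field := SubField x of x \in S.
Definition sub_field_val u := let: SubField x _ := u in x.
HB.instance Definition _ := [isSub for sub_field_val].
HB.instance Definition _ := [Choice of sub_field by <:].
HB.instance Definition _ := [SubChoice_isSubUnitRing of sub_field by <:].
HB.instance Definition _ := [SubNzRing_isSubComNzRing of sub_field by <:].
HB.instance Definition _ := [SubComUnitRing_isSubIntegralDomain of sub_field by <:].
HB.instance Definition _ := [SubIntegralDomain_isSubField of sub_field by <:].
End SubField.
Arguments sub_field {F} S.

(* [xi_place] is a dummy dependency, so that the [divringClosed] instance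
   below can be declared. *)
Definition Fbar_pred {Rr : realType} {F : fieldType} {xi : F -> option Rr}
  (xi_place : Mset xi) : {pred Rr} := fun a => `[< Fbar xi a >].

Section Fbar.
Context {Rr : realType} {F : fieldType} {xi : F -> option Rr}.
Hypothesis xi_place : Mset xi.

Lemma Fbar_predP a : (a \in Fbar_pred xi_place) <-> Fbar xi a.
Proof. by rewrite unfold_in /Fbar_pred; split => [/asboolP|?]; [|apply/asboolP]. Qed.

Lemma Fbar_divring_closed : divring_closed (Fbar_pred xi_place).
Proof.
split.
- by apply/Fbar_predP; exists 1; apply: (place1 xi_place).
- move=> u v /Fbar_predP [x Ex] /Fbar_predP [y Ey]; apply/Fbar_predP.
  by exists (x - y); apply: (placeD xi_place I I Ex (placeN xi_place Ey)).
- move=> u v /Fbar_predP [x Ex] /Fbar_predP [y Ey]; apply/Fbar_predP.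
  have [->|v0] := eqVneq v 0; first by exists 0; rewrite invr0 mulr0 (place0 xi_place I).
  by exists (x / y); apply: (placeM xi_place I I Ex (placeV xi_place I I I Ey v0)).
Qed.
End Fbar.

HB.instance Definition _ (Rr : realType) (F : fieldType) (xi : F -> option Rr)
  (xi_place : Mset xi) :=
  GRing.isDivringClosed.Build Rr (Fbar_pred xi_place) (Fbar_divring_closed xi_place).

Section FbarY.
Context {Rr : realType} {F : fieldType} {xi : F -> option Rr}.
Hypothesis xi_place : Mset xi.
Local Notation Fb := (sub_field (Fbar_pred xi_place)).

Definition Fbar_cfrac : {rmorphism Fb -> ratfun Rr} := cfracm Rr \o val.

Lemma Fbar_cfrac_yvar p :
  (map_poly Fbar_cfrac p).[yvar Rr] = pfrac (map_poly val p).
Proof. by rewrite /Fbar_cfrac map_poly_comp horner_cfracm_yvar. Qed.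

Lemma pfrac_val_eq0 (p : {poly Fb}) : (pfrac (map_poly val p) == 0) = (p == 0).
Proof. by rewrite /pfrac tofrac_eq0 map_poly_eq0. Qed.

Lemma Fbar_yP w : Fbar_y xi w <-> exists p q : {poly Fb},
  q != 0 /\ w = pfrac (map_poly val p) / pfrac (map_poly val q).
Proof.
split=> [[p [q [Fp Fq q0 ->]]]|[p [q [q0 ->]]]].
  have lift (r : {poly Rr}) : (forall i, Fbar xi r`_i) ->
      exists rb : {poly Fb}, map_poly val rb = r.
    move=> Fr; exists (\poly_(i < size r) insubd (0 : Fb) r`_i).
    apply/polyP => i; rewrite coef_map /= coef_poly.
    case: ltnP => hi; last by rewrite nth_default.
    by rewrite val_insubd; case: ifP => // /negP []; apply/Fbar_predP.
  have [pb <-] := lift p Fp; have [qb eqb] := lift q Fq.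
  exists pb, qb; rewrite eqb; split => //.
  by apply: contra_neq q0 => qb0; rewrite -eqb qb0 rmorph0.
have Fval (r : {poly Fb}) i : Fbar xi (map_poly val r)`_i.
  by rewrite coef_map /=; apply/Fbar_predP; apply: valP.
by exists (map_poly val p), (map_poly val q); split; rewrite ?map_poly_eq0.
Qed.

Lemma Fbar_yD w1 w2 : Fbar_y xi w1 -> Fbar_y xi w2 -> Fbar_y xi (w1 + w2).
Proof.
move=> /Fbar_yP [p1 [q1 [q10 ->]]] /Fbar_yP [p2 [q2 [q20 ->]]]; apply/Fbar_yP.
exists (p1 * q2 + p2 * q1), (q1 * q2); split; first by rewrite mulf_neq0.
by rewrite addf_div ?pfrac_val_eq0 // /pfrac !rmorphD !rmorphM.
Qed.

Lemma Fbar_yM w1 w2 : Fbar_y xi w1 -> Fbar_y xi w2 -> Fbar_y xi (w1 * w2).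
Proof.
move=> /Fbar_yP [p1 [q1 [q10 ->]]] /Fbar_yP [p2 [q2 [q20 ->]]]; apply/Fbar_yP.
exists (p1 * p2), (q1 * q2); split; first by rewrite mulf_neq0.
by rewrite mulf_div /pfrac !rmorphM.
Qed.

Lemma Fbar_yV w : Fbar_y xi w -> Fbar_y xi w^-1.
Proof.
move=> /Fbar_yP [p [q [q0 ->]]]; apply/Fbar_yP.
have [->|p0] := eqVneq p 0.
  by exists 0, 1; split; rewrite ?oner_neq0 // /pfrac !rmorph0 !mul0r invr0.
by exists q, p; rewrite invf_div.
Qed.

Lemma Fbar_y_cfrac c : Fbar_y xi (Fbar_cfrac c).
Proof.
apply/Fbar_yP; exists c%:P, 1; split; first exact: oner_neq0.
by rewrite /pfrac !rmorph1 divr1 map_polyC.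
Qed.

Lemma Fbar_y0 : Fbar_y xi 0.
Proof. by rewrite -(rmorph0 Fbar_cfrac); apply: Fbar_y_cfrac. Qed.

Lemma Fbar_y_ycoord at_infty : Fbar_y xi (ycoord Rr at_infty).
Proof.
have Fy : Fbar_y xi (yvar Rr).
  apply/Fbar_yP; exists 'X, 1; split; first exact: oner_neq0.
  by rewrite /pfrac !rmorph1 divr1 map_polyX.
by case: at_infty; rewrite /ycoord //; apply: Fbar_yV.
Qed.
End FbarY.

Section Iota.
Context {Rr : realType} {R : archiRcfType} {F : fieldType} {xi : F -> option Rr}.
Hypothesis xi_place : Mset xi.
Context {xiy : ratfun F -> option (ratfun Rr)}.
Hypothesis xiy_ext : is_const_ext xi xiy.
Context {Z : (ratfun R -> option Rr) -> ratfun Rr -> option Rr}.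
Hypothesis Z_ext : forall zeta, Mset zeta -> is_const_ext_Fbar xi zeta (Z zeta).
Local Notation iota := (iota_map xiy Z).
Local Notation Fb := (sub_field (Fbar_pred xi_place)).

Let xiy_place : is_place xiy. Proof. by case: xiy_ext. Qed.
Let xiy_Fbar_y {f a} : xiy f = Some a -> Fbar_y xi a. Proof. by case: xiy_ext => _ + _ _; apply. Qed.

Lemma xiy_yvar : xiy (yvar F) = Some (yvar Rr).
Proof.
have xi_X i : xi ('X : {poly F})`_i = Some ('X : {poly Rr})`_i.
  by rewrite !coefX; case: (i == 1)%N; rewrite ?(place1 xi_place) ?(place0 xi_place I).
case: xiy_ext => _ _ _ ->; last by move=> i; rewrite xi_X.
congr (Some (pfrac _)); apply/polyP => i.
by rewrite /xi_bar coef_map_id0 ?(place0 xi_place I) // xi_X.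
Qed.

Lemma iota_Mset zeta : Mset zeta -> Mset (iota zeta).
Proof.
move=> zP; have [Z_place _ _] := Z_ext _ zP; rewrite /Mset /iota_map.
exact: (place_comp xiy_place Z_place (Fbar_y0 xi_place) (@xiy_Fbar_y)).
Qed.

Lemma iota_yvar {zeta} : Mset zeta -> iota zeta (yvar F) = zeta (yvar R).
Proof. by move=> zP; rewrite /iota_map xiy_yvar /=; case: (Z_ext _ zP). Qed.

Lemma iota_inj zeta1 zeta2 : Mset zeta1 -> Mset zeta2 ->
  iota zeta1 =1 iota zeta2 -> zeta1 =1 zeta2.
Proof.
move=> z1P z2P eq_iota; apply: ratfun_place_eq => //.
by rewrite -(iota_yvar z1P) -(iota_yvar z2P) eq_iota.
Qed.

Lemma Z_ycoord {at_infty zeta x} : Mset zeta ->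
  zeta (ycoord R at_infty) = Some x -> Z zeta (ycoord Rr at_infty) = Some x.
Proof.
move=> zP; have [Z_place _ Z_y] := Z_ext _ zP.
case: at_infty; rewrite /ycoord; last by rewrite Z_y.
case Ey: (zeta (yvar R)) => [a|] Ex; last first.
  rewrite (place_inftyV zP I Ey) in Ex; case: Ex => <-.
  by apply: (place_inftyV Z_place (Fbar_y_ycoord xi_place false)); rewrite Z_y.
have a0 : a != 0.
  apply/eqP => a0; have := placeM zP I I Ey Ex.
  by rewrite mulfV ?yvar_neq0 // (place1 zP) a0 mul0r => -[]/eqP; rewrite oner_eq0.
rewrite (placeV zP I I I Ey a0) in Ex; case: Ex => <-.
apply: (placeV Z_place (Fbar_y0 xi_place)) => //; first exact: (Fbar_y_ycoord xi_place false).
  exact: (Fbar_y_ycoord xi_place true).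
by rewrite Z_y.
Qed.

Lemma Z_horner_div {at_infty} {P Q u v : {poly Fb}} {zeta x} :
  u * P + v * Q = 1 -> (map_poly (Fbar_cfrac xi_place) Q).[ycoord Rr at_infty] != 0 ->
  Mset zeta -> zeta (ycoord R at_infty) = Some x ->
  Z zeta ((map_poly (Fbar_cfrac xi_place) P).[ycoord Rr at_infty] /
          (map_poly (Fbar_cfrac xi_place) Q).[ycoord Rr at_infty]) =
  if (map_poly val Q).[x] == 0 then None
  else Some ((map_poly val P).[x] / (map_poly val Q).[x]).
Proof.
move=> Bezout Qt zP Ex; have [Z_place Z_const _] := Z_ext _ zP.
have Z_f c : Z zeta (Fbar_cfrac xi_place c) = Some (val c).
  by apply: Z_const; apply/Fbar_predP; apply: valP.
exact: (place_horner_div (Fbar_cfrac xi_place) val Z_place (Fbar_yD xi_place)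
  (Fbar_yM xi_place) (Fbar_yV xi_place) (Fbar_y_cfrac xi_place) Z_f
  (Fbar_y_ycoord xi_place at_infty) (Z_ycoord zP Ex) Bezout Qt).
Qed.

Lemma iota_continuous : Mcontinuous iota.
Proof.
move=> b zeta zP [v Ev v0]; move: Ev; rewrite {1}/iota_map.
case Exb: (xiy b) => [w|] //= Ew.
have [p [q [q0 ew]]] := (Fbar_yP xi_place w).1 (xiy_Fbar_y Exb).
rewrite -!Fbar_cfrac_yvar in ew.
have qy : (map_poly (Fbar_cfrac xi_place) q).[yvar Rr] != 0.
  by rewrite Fbar_cfrac_yvar pfrac_val_eq0.
set at_infty := zeta (yvar R) == None.
have [P [Q [u [v' [Bezout Qt ew']]]]] := ycoord_coprime (Fbar_cfrac xi_place) at_infty p q qy.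
have [c Ec] : exists c, zeta (ycoord R at_infty) = Some c := place_finite_or_inv _ zP.
have iotaE zeta' x : Mset zeta' -> zeta' (ycoord R at_infty) = Some x ->
    iota zeta' b = if (map_poly val Q).[x] == 0 then None
                   else Some ((map_poly val P).[x] / (map_poly val Q).[x]).
  by move=> z'P Ex; rewrite /iota_map Exb /= ew ew' (Z_horner_div Bezout Qt z'P Ex).
move: (iotaE _ _ zP Ec); rewrite /iota_map Exb /= Ew.
case: eqP => // /eqP Qc [vE]; rewrite vE in v0.
have [d d0 hd] := horner_div_gt0_nbhs Qc v0.
have [B [HB nbhsB]] := place_nbhs (cfracm R) zP Ec d0.
exists [:: B]; split=> [_ /[1!inE] /eqP -> //|zeta' z'P HB'].
have [x Ex /hd [Qx PQx]] := nbhsB zeta' z'P (HB' B (mem_head _ _)).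
exists ((map_poly val P).[x] / (map_poly val Q).[x]) => //.
by have := iotaE _ _ z'P Ex; rewrite (negbTE Qx).
Qed.
End Iota.

Theorem theorem6p2
  (Rr : realType)                       (* the real numbers *)
  (R : archiRcfType) (emb : {rmorphism R -> Rr})   (* R ⊆ ℝ *)
  (F : fieldType) (iF : {rmorphism R -> F})        (* F ⊇ R *)
  (HF : formally_real F)
  (xi : F -> option Rr) (Hxi : Mset xi)
  (HxiR : forall r : R, xi (iF r) = Some (emb r))
  (xiy : ratfun F -> option (ratfun Rr)) (Hxiy : is_const_ext xi xiy)
  (Z : (ratfun R -> option Rr) -> ratfun Rr -> option Rr)
  (HZ : forall zeta, Mset zeta -> is_const_ext_Fbar xi zeta (Z zeta)) :
  [/\ forall zeta, Mset zeta -> Mset (iota_map xiy Z zeta),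
      forall zeta1 zeta2, Mset zeta1 -> Mset zeta2 ->
        iota_map xiy Z zeta1 =1 iota_map xiy Z zeta2 -> zeta1 =1 zeta2 &
      Mcontinuous (iota_map xiy Z)].
Proof.
split.
- exact: (iota_Mset Hxi Hxiy HZ).
- exact: (iota_inj Hxi Hxiy HZ).
- exact: (iota_continuous Hxi Hxiy HZ).
Qed.
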